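(* For non-negative random variables $Y$ and $Z$ satisfying $0\le Y+Z\le1$, we have $\operatorname{Var}[YZ]\le 8\big(\operatorname{Var}[Y]+\operatorname{Var}[Z]\big)$. *)

From HB Require Import structures.
From mathcomp Require Import all_boot all_order all_algebra.
From mathcomp Require Import all_classical all_reals all_analysis.

From HB Require Import structures.
From mathcomp Require Import all_boot all_order all_algebra.
From mathcomp Require Import all_classical all_reals all_analysis.
From mathcomp Require Import lra measurable_realfun.
Import Order.TTheory GRing.Theory Num.Theory.
Local Open Scope ring_scope.

(** Both [Y] and [Z] take values in [[0, 1]].  Writing [a = E Y] and
    [b = E Z], the pointwise identity
    [Y Z - a b = (Y - a) Z + a (Z - b)] with [|Z| <= 1] and [|a| <= 1] gives
    [(Y Z - a b)^2 <= 2 (Y - a)^2 + 2 (Z - b)^2].  Since the variance of [Y Z]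
    is at most its mean squared deviation from any constant, in particular from
    [a b], taking expectations yields [Var (Y Z) <= 2 (Var Y + Var Z)],
    which is better than the claimed constant 8. *)

Lemma sqr_mulB_le (R : realDomainType) (M y z a b : R) :
  `|z| <= M -> `|a| <= M ->
  (y * z - a * b) ^+ 2 <= 2 * M ^+ 2 * ((y - a) ^+ 2 + (z - b) ^+ 2).
Proof.
move=> zM aM.
(* y z - a b = u + v with u = (y - a) z, v = a (z - b), and
   (u + v)^2 <= 2 u^2 + 2 v^2 since (u - v)^2 >= 0. *)
have sqr_le_M u : `|u| <= M -> u ^+ 2 <= M ^+ 2.
  by move=> uM; rewrite -real_normK ?num_real // lerXn2r ?nnegrE // (le_trans _ uM).
have := sqr_le_M _ zM; have := sqr_le_M _ aM.
have := sqr_ge0 ((y - a) * z - a * (z - b)).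
have := sqr_ge0 (y - a); have := sqr_ge0 (z - b).
nra.
Qed.

Section bounded_variance.
Local Open Scope ereal_scope.
Context {d} {T : measurableType d} {R : realType}.

Lemma bounded_Lfun (mu : {finite_measure set T -> \bar R}) (f : T -> R) (M r : R) :
  (0 < r)%R -> measurable_fun setT f -> (forall x, `|f x| <= M)%R ->
  f \in Lfun mu r%:E.
Proof.
move=> r0 mf fM; rewrite inE/=; apply/andP; split; rewrite inE//=.
rewrite /finite_norm unlock poweR_lty//.
under eq_integral => x _ do rewrite /comp abse_EFin poweR_EFin.
apply: (@le_lt_trans _ _ (\int[mu]_x (M `^ r)%:E)).
  apply: ge0_le_integral => //.
  - apply/measurable_EFinP; apply: (measurableT_comp (measurable_powR _)) => //.
    exact: measurableT_comp.
  - move=> x _; rewrite lee_fin.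
    by apply: ge0_ler_powR; rewrite ?nnegrE ?(ltW r0) ?(le_trans _ (fM x)).
by rewrite integral_cst //= ltey_eq fin_numM ?fin_num_measure.
Qed.

Lemma LfunB_cst (mu : {finite_measure set T -> \bar R}) (X : T -> R) (c r : R) :
  (1 <= r)%R -> X \in Lfun mu r%:E -> (X \- cst c)%R \in Lfun mu r%:E.
Proof. by move=> r1 Xr; rewrite rpredB //; apply: Lfun_cst. Qed.

Variable P : probability T R.

Lemma abse_expectation_le (X : T -> R) (M : R) :
  measurable_fun setT X -> (forall x, `|X x| <= M)%R -> `|'E_P[X]| <= M%:E.
Proof.
move=> mX XM; rewrite unlock.
apply: (le_trans (le_abse_integral _ _ _)) => //; first exact/measurable_EFinP.
rewrite -[leRHS]mule1 -(probability_setT P) -integral_cst //.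
apply: ge0_le_integral => //.
- exact/measurableT_comp/measurable_EFinP.
- by move=> x _; rewrite /= lee_fin.
Qed.

Lemma variance_sqr (X : T -> R) :
  'V_P[X] = 'E_P[(X \- cst (fine 'E_P[X])) ^+ 2].
Proof. by rewrite /variance covariance.unlock expr2. Qed.

Lemma variance_le_expectation_sqr (X : T -> R) (c : R) : X \in Lfun P 2%:E ->
  'V_P[X] <= 'E_P[(X \- cst c) ^+ 2].
Proof.
move=> X2.
have Xc2 : (X \- cst c)%R \in Lfun P 2%:E by rewrite LfunB_cst ?ler1n.
have Xc1 := Lfun_subset12 (fin_num_measure P _ measurableT) Xc2.
rewrite -(varianceB_cst_r c X2) varianceE // -[leRHS]sube0 leeB //.
by rewrite -(fineK (expectation_fin_num Xc1)) -EFin_expe lee_fin sqr_ge0.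
Qed.

Lemma variance_mul_le (Y Z : T -> R) (M : R) :
  measurable_fun setT Y -> measurable_fun setT Z ->
  (forall x, `|Y x| <= M)%R -> (forall x, `|Z x| <= M)%R ->
  'V_P[(Y \* Z)%R] <= (2 * M ^+ 2)%:E * ('V_P[Y] + 'V_P[Z]).
Proof.
move=> mY mZ YM ZM.
have Y2 : Y \in Lfun P 2%:E by apply: bounded_Lfun YM.
have Z2 : Z \in Lfun P 2%:E by apply: bounded_Lfun ZM.
have YZ2 : (Y \* Z)%R \in Lfun P 2%:E.
  apply: (bounded_Lfun P _ (M * M)%R) => //; first exact: measurable_funM.
  by move=> x; rewrite /= normrM ler_pM.
have centered_sqr_Lfun1 (X : T -> R) c : X \in Lfun P 2%:E ->
    ((X \- cst c) ^+ 2)%R \in Lfun P 1.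
  by move=> X2; apply: Lfun2_mul_Lfun1; rewrite LfunB_cst ?ler1n.
set a := fine 'E_P[Y]; set b := fine 'E_P[Z].
have aM : (`|a| <= M)%R.
  have Y1 := Lfun_subset12 (fin_num_measure P _ measurableT) Y2.
  have := abse_expectation_le _ _ mY YM.
  by rewrite -(fineK (expectation_fin_num Y1)) abse_EFin lee_fin.
apply: le_trans (variance_le_expectation_sqr _ (a * b)%R YZ2) _.
rewrite !variance_sqr -/a -/b -expectationD ?centered_sqr_Lfun1 //.
rewrite -expectationZl ?rpredD ?centered_sqr_Lfun1 //.
apply: expectation_le.
- by apply: measurable_funM; apply: measurable_funB => //; exact: measurable_funM.
- apply: measurable_funM => //; apply: measurable_funD;
    by apply: measurable_funM; exact: measurable_funB.
- by move=> x; exact: sqr_ge0.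
- move=> x; apply: mulr_ge0; first by apply: addr_ge0; exact: sqr_ge0.
  by rewrite mulr_ge0 ?sqr_ge0.
- by apply: aeW => x /=; rewrite [leRHS]mulrC; exact: sqr_mulB_le.
Qed.

End bounded_variance.

Theorem corollary1 (d : measure_display) (T : measurableType d) (R : realType)
  (P : probability T R) (Y Z : {RV P >-> R})
  (hY : forall w, 0 <= Y w) (hZ : forall w, 0 <= Z w)
  (hYZ : forall w, Y w + Z w <= 1) :
  ('V_P[(Y \* Z)%R] <= 8%:E * ('V_P[Y] + 'V_P[Z]))%E.
Proof.
have Y1 w : `|Y w| <= 1 by rewrite ger0_norm // (le_trans _ (hYZ w)) // lerDl.
have Z1 w : `|Z w| <= 1 by rewrite ger0_norm // (le_trans _ (hYZ w)) // lerDr.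
apply: le_trans (variance_mul_le P Y Z 1 _ _ Y1 Z1) _ => //.
rewrite expr1n mulr1 lee_wpmul2r ?lee_fin ?ler_nat //.
by rewrite adde_ge0 ?variance_ge0.
Qed.
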